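(* Let $q=3^m$ with $m\ge1$ and $f(x)=x^{q+2}$ on $\mathbb{F}_{q^2}$. Then $W_f(a,b)\in\{-q,0,q,2q\}$ for all $a\in\mathbb{F}_{q^2}$ and $b\in\mathbb{F}_{q^2}^*$.
   Context: The Walsh transform is $W_f(a,b)=\sum_{x\in\mathbb{F}_{q^2}}\xi_3^{\mathrm{Tr}_{\mathbb{F}_{q^2}/\mathbb{F}_3}(bf(x)-ax)}$ with $\xi_3=e^{2\pi i/3}$ and $\mathrm{Tr}_{\mathbb{F}_{q^2}/\mathbb{F}_3}$ the absolute trace. *)

From mathcomp Require Import all_boot all_order all_algebra all_field.
Set Implicit Arguments. Unset Strict Implicit. Unset Printing Implicit Defensive.
Import Order.TTheory GRing.Theory Num.Theory.
Local Open Scope ring_scope.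

Definition xi3 : algC := (-1 + 'i * sqrtC 3) / 2.

(* Absolute trace of F_{3^n} over F_3 (with #|F| = 3^n): sum_{i<n} x^(3^i).
   Its values lie in the prime subfield {0, 1, 2}. *)
Definition abs_trace (F : finFieldType) (n : nat) (x : F) : F :=
  \sum_(i < n) x ^+ (3 ^ i).

(* xi_3 ^ t for t in the prime field F_3 ⊆ F (char 3): t = k%:R with k in {0,1,2}. *)
Definition xi3_pow (F : finFieldType) (t : F) : algC :=
  if [pick k : 'I_3 | t == (k : nat)%:R] is Some k then xi3 ^+ k else 0.

(* Walsh transform on F = F_{q^2}, q = 3^m (so #|F| = 3^(2m)). *)
Definition walsh (F : finFieldType) (m : nat) (f : F -> F) (a b : F) : algC :=
  \sum_(x : F) xi3_pow (abs_trace (2 * m) (b * f x - a * x)).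

From mathcomp Require Import all_boot all_order all_algebra all_field.
From mathcomp Require Import ring.
Import GRing.Theory Num.Theory.
Set Implicit Arguments. Unset Strict Implicit. Unset Printing Implicit Defensive.
Local Open Scope ring_scope.

(* Write q = 3^m and psi x = xi3^(Tr x). As 2 = -1 in characteristic 3, every
   u in F_(q^2) is uniquely s + k with s^q = s and k^q = -k. Substituting
   x = u / b turns b x^(q+2) into c u^(q+2) with c = b^-(q+1) in F_q, and
   (s + k)^(q+2) = (s - k)(s + k)^2. The terms c s^2 k and c k^3 have trace 0,
   and c s^3 = (r s)^3 has the trace of r s for a cube root r of c, so W is a
   sum over k of psi(-a k / b) times the character sum over s in F_q of
   psi(s (r - a/b - c k^2)). That inner sum is q when r - a/b - c k^2 is in
   the (-1)-eigenspace of x |-> x^q, which happens iff k^2 equals a constant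
   g, and 0 otherwise. Hence W / q is a sum of psi over the square roots of g,
   which is 0, psi 0 = 1, or psi x + psi (-x), equal to 2 or -1. *)

Lemma xi3_rel : xi3 ^+ 2 + xi3 + 1 = 0.
Proof.
have i2 : 'i ^+ 2 = -1 :> algC by exact: sqrCi.
have s3 : sqrtC 3 ^+ 2 = 3 :> algC by exact: sqrtCK.
have n2 : (2 : algC) != 0 by rewrite pnatr_eq0.
by rewrite /xi3 expr_div_n sqrrD exprMn i2 s3; field.
Qed.

Lemma prim3_xi3 : 3.-primitive_root xi3.
Proof.
have xi3_3 : xi3 ^+ 3 = 1.
  have : xi3 ^+ 3 - 1 = (xi3 - 1) * (xi3 ^+ 2 + xi3 + 1) by ring.
  by rewrite xi3_rel mulr0 => /eqP; rewrite subr_eq0 => /eqP.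
have xi3_neq1 : xi3 != 1.
  apply/eqP=> x1; have /eqP := xi3_rel.
  rewrite x1 expr1n => /eqP three0.
  have /negP[] : (3%:R : algC) != 0 by rewrite pnatr_eq0.
  by apply/eqP; rewrite -three0; ring.
apply/andP; split=> //; apply/forallP=> -[i lti]; rewrite unity_rootE /=.
case: i lti => [|[|[|//]]] _.
- by rewrite expr1 (negPf xi3_neq1).
- rewrite eqbF_neg; apply: contra xi3_neq1 => /eqP x2.
  by rewrite -[xi3]mul1r -{1}x2 -exprSr xi3_3.
- by rewrite xi3_3 !eqxx.
Qed.

Lemma eqr_nat_pchar (R : nzRingType) p m n : p \in [pchar R] ->
  (m%:R == n%:R :> R) = (m == n %[mod p]).
Proof.
move=> chp; wlog le_nm : m n / (n <= m)%N.
  by move=> W; case/orP: (leq_total n m) => /W //; rewrite eq_sym => ->.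
by rewrite eqn_mod_dvd // (dvdn_pcharf chp) natrB // subr_eq0.
Qed.

Lemma exists_nonroot (R : finIdomainType) (p : {poly R}) :
  p != 0 -> (size p <= #|R|)%N -> exists z, ~~ root p z.
Proof.
move=> p0 sz_p; apply/existsP; apply: contraTT sz_p; rewrite negb_exists => /forallP h.
rewrite -ltnNge cardE; apply: max_poly_roots => //; last exact: enum_uniq.
by apply/allP => z _; have := h z; rewrite negbK.
Qed.

Section CharThree.

Variable F : finFieldType.
Hypothesis ch3 : 3%N \in [pchar F].

Lemma pchar3_pnat i : [pchar F].-nat (3 ^ i)%N.
Proof. by rewrite pnatX (eq_pnat _ (pcharf_eq ch3)) pnat_id ?orbT. Qed.

Lemma expr_sum_pchar3 (I : Type) (r : seq I) (P : pred I) (G : I -> F) i :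
  (\sum_(j <- r | P j) G j) ^+ (3 ^ i) = \sum_(j <- r | P j) G j ^+ (3 ^ i).
Proof.
apply: (big_morph (fun x => x ^+ (3 ^ i))) => [x y|]; first exact/exprDn_pchar/pchar3_pnat.
by rewrite expr0n expn_eq0.
Qed.

Lemma abs_trace0 n : abs_trace n (0 : F) = 0.
Proof. by apply: big1 => i _; rewrite expr0n expn_eq0. Qed.

Lemma abs_traceD n (x y : F) : abs_trace n (x + y) = abs_trace n x + abs_trace n y.
Proof.
by rewrite /abs_trace -big_split; apply: eq_bigr => i _; rewrite exprDn_pchar ?pchar3_pnat.
Qed.

Lemma abs_traceN n (x : F) : abs_trace n (- x) = - abs_trace n x.
Proof.
by rewrite /abs_trace -sumrN; apply: eq_bigr => i _; rewrite exprNn_pchar ?pchar3_pnat.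
Qed.

Lemma xi3_pow_natr n : xi3_pow (n%:R : F) = xi3 ^+ n.
Proof.
rewrite /xi3_pow; case: pickP => [k | /(_ (Ordinal (ltn_pmod n (isT : (0 < 3)%N))))].
  by rewrite eq_sym (eqr_nat_pchar _ _ ch3) -(eq_prim_root_expr prim3_xi3) => /eqP.
by rewrite /= (eqr_nat_pchar _ _ ch3) modn_mod eqxx.
Qed.

Lemma cube_fixed_natr (t : F) : t ^+ 3 = t -> exists k : 'I_3, t = (k : nat)%:R.
Proof.
move=> t3; have : t * (t - 1) * (t - 2%:R) = 0.
  have -> : t * (t - 1) * (t - 2%:R) = t ^+ 3 - t - 3%:R * (t ^+ 2 - t) by ring.
  by rewrite t3 (pcharf0 ch3) mul0r subrr subr0.
move/eqP; rewrite !mulf_eq0 !subr_eq0 => /orP[/orP[]|] /eqP ->.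
- by exists (@Ordinal 3 0 isT).
- by exists (@Ordinal 3 1 isT).
- by exists (@Ordinal 3 2 isT).
Qed.

End CharThree.

Section AbsoluteTrace.

Variables (F : finFieldType) (n : nat).
Hypothesis cardF : #|F| = (3 ^ n)%N.

Lemma pchar3_card : 3%N \in [pchar F].
Proof. exact: (@card_finPcharP F 3 n cardF). Qed.

Let ch3 := pchar3_card.
Local Notation Tr := (@abs_trace F n).

Lemma degree_gt0 : (0 < n)%N.
Proof. by rewrite -(ltn_exp2l 0 _ (isT : (1 < 3)%N)) -cardF finNzRing_gt1. Qed.

Lemma abs_trace_exp3 x : Tr (x ^+ 3) = Tr x.
Proof.
apply/eqP; rewrite -subr_eq0 /abs_trace -sumrB.
under eq_bigr do rewrite -exprM -expnS.
rewrite -(big_mkord xpredT (fun i => x ^+ (3 ^ i.+1) - x ^+ (3 ^ i))).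
by rewrite telescope_sumr // -cardF expf_card expr1 subrr.
Qed.

Lemma abs_trace_exp3n x k : Tr (x ^+ (3 ^ k)) = Tr x.
Proof.
elim: k => [|k IHk]; first by rewrite expr1.
by rewrite expnSr exprM abs_trace_exp3.
Qed.

Lemma abs_trace_cube x : Tr x ^+ 3 = Tr x.
Proof.
rewrite -{2}abs_trace_exp3 /abs_trace (expr_sum_pchar3 ch3 _ _ _ 1).
by apply: eq_bigr => i _; rewrite -!exprM mulnC.
Qed.

Lemma abs_trace_natr x : exists k : 'I_3, Tr x = (k : nat)%:R.
Proof. exact/cube_fixed_natr/abs_trace_cube/ch3. Qed.

Lemma abs_trace_neq0 : exists z, Tr z != 0.
Proof.
have def_n : n = n.-1.+1 by rewrite prednK ?degree_gt0.
pose p : {poly F} := \sum_(i < n) 'X^(3 ^ i).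
have p_neq0 : p != 0.
  apply/eqP => /(congr1 (coefp 1)) /eqP; rewrite /= coef0 /p coef_sum def_n big_ord_recl /=.
  rewrite coefXn eqxx big1 ?addr0 ?oner_eq0 // => i _.
  by rewrite coefXn ltn_eqF // -{1}(expn0 3) ltn_exp2l.
have [z p_z] : exists z, ~~ root p z.
  apply: exists_nonroot => //; apply: leq_trans (size_sum _ _ _) _.
  apply/bigmax_leqP => i _; rewrite size_polyXn cardF ltn_exp2l //.
by exists z; move: p_z; rewrite /root /p horner_sum; under eq_bigr do rewrite hornerXn.
Qed.

Definition psi (x : F) : algC := xi3_pow (Tr x).

Lemma psi_xi3 x : exists k : nat, Tr x = k%:R /\ psi x = xi3 ^+ k.
Proof.
have [k Tr_x] := abs_trace_natr x.
by exists k; rewrite /psi Tr_x (xi3_pow_natr ch3).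
Qed.

Lemma psiD x y : psi (x + y) = psi x * psi y.
Proof.
have [i [Tr_x ->]] := psi_xi3 x; have [j [Tr_y ->]] := psi_xi3 y.
by rewrite /psi (abs_traceD ch3) Tr_x Tr_y -natrD (xi3_pow_natr ch3) exprD.
Qed.

Lemma psi_eq1 x : (psi x == 1) = (Tr x == 0).
Proof.
have [k [-> ->]] := psi_xi3 x.
by rewrite -(prim_order_dvd prim3_xi3) (dvdn_pcharf ch3).
Qed.

Lemma psiD_abs_trace0 x y : Tr y = 0 -> psi (x + y) = psi x.
Proof.
move=> Tr_y; have /eqP psi_y : psi y == 1 by rewrite psi_eq1 Tr_y.
by rewrite psiD psi_y mulr1.
Qed.

Lemma psi_cube x : psi x ^+ 3 = 1.
Proof.
by have [k [_ ->]] := psi_xi3 x; rewrite -exprM mulnC exprM (prim_expr_order prim3_xi3) expr1n.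
Qed.

Lemma psiN x : psi (- x) = psi x ^+ 2.
Proof.
have psiNx : psi (- x) * psi x = 1.
  by rewrite -psiD addNr; apply/eqP; rewrite psi_eq1 abs_trace0.
by rewrite -[psi (- x)]mulr1 -(psi_cube x) exprS mulrA psiNx mul1r.
Qed.

Lemma psiN_add_psi x : psi (- x) + psi x = 2 \/ psi (- x) + psi x = -1.
Proof.
rewrite psiN; have [->|psi_neq1] := eqVneq (psi x) 1; [left | right].
  by rewrite expr1n.
have : (psi x - 1) * (psi x ^+ 2 + psi x + 1) = psi x ^+ 3 - 1 by ring.
rewrite psi_cube subrr => /eqP.
by rewrite mulf_eq0 subr_eq0 (negPf psi_neq1) addr_eq0 => /eqP.
Qed.

Lemma exists_cube_root (x : F) : exists r, r ^+ 3 = x.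
Proof.
by exists (x ^+ (3 ^ n.-1)); rewrite -exprM -expnSr prednK ?degree_gt0 // -cardF expf_card.
Qed.

Lemma sum_psi_sqrt (P : pred F) a g : (forall k, P k -> P (- k)) ->
  let S := \sum_(k | P k && (k ^+ 2 == g)) psi (a * k) in
  S = -1 \/ S = 0 \/ S = 1 \/ S = 2.
Proof.
move=> PN S; have psi0 : psi 0 = 1 by apply/eqP; rewrite psi_eq1 abs_trace0.
have [k0 /andP[Pk0 /eqP k0g] | no_root] := pickP (fun k => P k && (k ^+ 2 == g)); last first.
  by right; left; apply: big_pred0.
have roots k : (k ^+ 2 == g) = (k == k0) || (k == - k0).
  by rewrite -k0g -subr_eq0 subr_sqr mulf_eq0 subr_eq0 addr_eq0.
have [k0_0 | k0_neq0] := eqVneq k0 0.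
  right; right; left; rewrite /S (big_pred1 0) ?mulr0 // => k /=.
  by rewrite roots k0_0 oppr0 orbb andb_idl // => /eqP ->; rewrite -k0_0.
have Nk0_neq : - k0 != k0.
  rewrite -subr_eq0 -opprD oppr_eq0 -mulr2n -mulr_natl mulf_eq0 negb_or k0_neq0 andbT.
  by rewrite -(dvdn_pcharf ch3).
have -> : S = psi (- (a * k0)) + psi (a * k0).
  rewrite /S (bigD1 k0) /=; last by rewrite Pk0 k0g eqxx.
  rewrite (bigD1 (- k0)) /=; last by rewrite PN // sqrrN k0g eqxx Nk0_neq.
  rewrite big1 ?addr0 ?mulrN 1?addrC // => k /andP[/andP[/andP[_ k_root] k_neq] k_neqN].
  by move: k_root; rewrite roots (negPf k_neq) (negPf k_neqN).
by case: (psiN_add_psi (a * k0)) => ->; auto.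
Qed.

End AbsoluteTrace.

Section QuadraticExtension.

Variables (F : finFieldType) (m : nat).
Hypothesis cardF : #|F| = ((3 ^ m) ^ 2)%N.

Local Notation q := (3 ^ m)%N.

Lemma card_pow3 : #|F| = (3 ^ (2 * m))%N.
Proof. by rewrite cardF -expnM mulnC. Qed.

Local Notation Tr := (@abs_trace F (2 * m)).
Local Notation psi := (@psi F (2 * m)).
Let ch3 := pchar3_card card_pow3.

Lemma exprqD (x y : F) : (x + y) ^+ q = x ^+ q + y ^+ q.
Proof. exact/exprDn_pchar/pchar3_pnat. Qed.

Lemma exprqN (x : F) : (- x) ^+ q = - x ^+ q.
Proof. exact/exprNn_pchar/pchar3_pnat. Qed.

Lemma exprqK (x : F) : (x ^+ q) ^+ q = x.
Proof. by rewrite -exprM -expnD addnn -mul2n -card_pow3 expf_card. Qed.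

Lemma q_gt1 : (1 < q)%N.
Proof. by rewrite -(ltn_exp2r 1 _ (isT : (0 < 2)%N)) -cardF finNzRing_gt1. Qed.

Definition Fq : pred F := fun x => x ^+ q == x.
Definition Kq : pred F := fun x => x ^+ q == - x.

Lemma KqN k : Kq k -> Kq (- k).
Proof. by rewrite /Kq exprqN => /eqP ->. Qed.

Lemma abs_trace_add_exprq x : Tr (x + x ^+ q) = - Tr x.
Proof.
rewrite (abs_traceD ch3) (abs_trace_exp3n card_pow3); apply/eqP; rewrite -subr_eq0 opprK.
by rewrite -mulr2n -mulrSr -mulr_natl (pcharf0 ch3) mul0r.
Qed.

Lemma abs_trace_Kq k : Kq k -> Tr k = 0.
Proof.
move=> /eqP Kk; apply/eqP; rewrite -oppr_eq0 -abs_trace_add_exprq Kk subrr.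
by rewrite abs_trace0.
Qed.

Lemma sum_Fq_Kq (R : nmodType) (G : F -> R) :
  \sum_u G u = \sum_(k | Kq k) \sum_(s | Fq s) G (s + k).
Proof.
(* The Kq-component of u is (u^q - u) / 2 = u^q - u, as 2 = -1. *)
rewrite (partition_big (fun u => u ^+ q - u) Kq) => [|u _]; last first.
  by rewrite /Kq exprqD exprqN exprqK opprB addrC.
apply: eq_bigr => k /eqP Kk.
rewrite (reindex_onto (fun s => s + k) (fun u => u - k)) => [|u _]; last by rewrite subrK.
apply: eq_bigl => s; rewrite addrK eqxx andbT /Fq exprqD Kk -subr_eq0 -[RHS]subr_eq0.
have -> : s ^+ q + - k - (s + k) - k = s ^+ q - s - 3%:R * k by ring.
by rewrite (pcharf0 ch3) mul0r subr0.
Qed.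

Lemma exists_notFq : exists z, ~~ Fq z.
Proof.
have size_p : size ('X^q - 'X : {poly F}) = q.+1.
  by rewrite size_polyDl size_polyXn // size_polyN size_polyX ltnS q_gt1.
have [z p_z] : exists z : F, ~~ root ('X^q - 'X) z.
  apply: exists_nonroot; first by rewrite -size_poly_eq0 size_p.
  by rewrite size_p cardF -{1}(expn1 q) ltn_exp2l // q_gt1.
by exists z; move: p_z; rewrite rootE !hornerE subr_eq0.
Qed.

Lemma card_Fq : #|Fq| = q.
Proof.
have [z Fq'z] := exists_notFq.
pose t := z ^+ q - z.
have t_neq0 : t != 0 by rewrite subr_eq0.
have Kt : t ^+ q = - t by rewrite exprqD exprqN exprqK opprB.
have card_Kq : #|Kq| = #|Fq|.
  rewrite -!sum1_card (reindex_onto (fun s => t * s) (fun k => k / t)) => [|k _]; last first.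
    by rewrite mulrC divfK.
  apply: eq_bigl => s; rewrite mulrC mulfK // eqxx andbT /Kq /Fq !unfold_in /= exprMn Kt.
  by rewrite mulrN (inj_eq (@oppr_inj _)) (inj_eq (mulIf t_neq0)).
have : #|F| = (#|Kq| * #|Fq|)%N.
  rewrite -sum1_card (sum_Fq_Kq (fun=> 1%N)) -sum_nat_const.
  by apply: eq_bigr => k _; rewrite sum1_card.
by rewrite cardF card_Kq mulnn => /eqP; rewrite eqn_exp2r // => /eqP.
Qed.

Lemma sum_psi_Fq l : \sum_(s | Fq s) psi (s * l) = if Kq l then q%:R else 0.
Proof.
have [Kl | Kq'l] := ifPn.
  rewrite -card_Fq -sum1_card natr_sum; apply: eq_bigr => s /eqP Fs.
  apply/eqP; rewrite (psi_eq1 card_pow3) abs_trace_Kq //.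
  by rewrite /Kq exprMn Fs (eqP Kl) mulrN.
have [z Tr_z] := abs_trace_neq0 card_pow3.
pose mu := l + l ^+ q; pose s0 := (z + z ^+ q) / mu.
have mu_neq0 : mu != 0 by apply: contra Kq'l; rewrite /mu addrC addr_eq0.
have Fs0 : Fq s0.
  by rewrite /Fq /s0 /mu exprMn exprVn !exprqD !exprqK [_ + z]addrC [_ + l]addrC.
have psi_s0l : psi (s0 * l) != 1.
  rewrite (psi_eq1 card_pow3); apply: contra Tr_z => /eqP Tr_s0l.
  rewrite -oppr_eq0 -abs_trace_add_exprq -[_ + _](divfK mu_neq0) -/s0.
  by rewrite /mu mulrDr -{2}(eqP Fs0) -exprMn abs_trace_add_exprq Tr_s0l oppr0.
set S := \sum_(s | Fq s) _.
have S_shift : S = S * psi (s0 * l).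
  rewrite {1}/S (reindex_inj (addIr s0)) mulr_suml; apply: eq_big => [s|s _].
    by rewrite /Fq exprqD (eqP Fs0) (inj_eq (addIr s0)).
  by rewrite mulrDl (psiD card_pow3).
have : S * (1 - psi (s0 * l)) = 0 by rewrite mulrBr mulr1 -S_shift subrr.
by move/eqP; rewrite mulf_eq0 subr_eq0 [1 == _]eq_sym (negPf psi_s0l) orbF => /eqP.
Qed.

Lemma walsh_rescale a b : b != 0 ->
  walsh m (fun x : F => x ^+ (q + 2)) a b =
  \sum_u psi ((b ^+ q.+1)^-1 * u ^+ (q + 2) - a / b * u).
Proof.
move=> b_neq0; rewrite /walsh (reindex_inj (can_inj (divfK b_neq0))) /=.
apply: eq_bigr => u _; rewrite /psi; congr (xi3_pow (abs_trace _ _)).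
have bq_neq0 : b ^+ q.+1 != 0 by rewrite expf_neq0.
by rewrite addn2 expr_div_n [b ^+ q.+2]exprSr; field; rewrite b_neq0 bq_neq0.
Qed.

Lemma psi_split c r a s k : c ^+ q = c -> r ^+ 3 = c -> Fq s -> Kq k ->
  psi (c * (s + k) ^+ (q + 2) - a * (s + k)) =
  psi (s * (r - a - c * k ^+ 2)) * psi (- (a * k)).
Proof.
move=> c_q r3 /eqP s_q /eqP k_q.
have -> : c * (s + k) ^+ (q + 2) - a * (s + k) =
    (s * (r - a - c * k ^+ 2) - a * k) + ((r * s) ^+ 3 - r * s) +
    (c * s ^+ 2 * k - c * k ^+ 3).
  by rewrite exprD exprqD s_q k_q exprMn r3; ring.
have Tr_cube : Tr ((r * s) ^+ 3 - r * s) = 0.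
  by rewrite (abs_traceD ch3) (abs_traceN ch3) (abs_trace_exp3 card_pow3) subrr.
have Tr_Kpart : Tr (c * s ^+ 2 * k - c * k ^+ 3) = 0.
  apply: abs_trace_Kq; rewrite /Kq exprqD exprqN !exprMn c_q s_q k_q.
  by apply/eqP; ring.
rewrite (psiD_abs_trace0 card_pow3 _ Tr_Kpart).
by rewrite (psiD_abs_trace0 card_pow3 _ Tr_cube) (psiD card_pow3).
Qed.

Lemma Kq_sub_sqr c e k : c ^+ q = c -> c != 0 -> Kq k ->
  Kq (e - c * k ^+ 2) = (k ^+ 2 == - (e + e ^+ q) / c).
Proof.
move=> c_q c_neq0 /eqP k_q.
rewrite /Kq exprqD exprqN exprMn c_q -exprM mulnC exprM k_q sqrrN.
rewrite -subr_eq0 -[RHS]subr_eq0.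
have -> : e ^+ q - c * k ^+ 2 - - (e - c * k ^+ 2) =
    (k ^+ 2 - - (e + e ^+ q) / c) * c - 3%:R * (c * k ^+ 2) by field.
by rewrite (pcharf0 ch3) mul0r subr0 mulf_eq0 (negPf c_neq0) orbF.
Qed.

Lemma walsh_sum_roots a b : b != 0 -> exists a' g,
  walsh m (fun x : F => x ^+ (q + 2)) a b =
  q%:R * \sum_(k | Kq k && (k ^+ 2 == g)) psi (a' * k).
Proof.
move=> b_neq0; pose c := (b ^+ q.+1)^-1.
have c_q : c ^+ q = c.
  by rewrite /c exprVn -exprM mulnC exprM exprS exprqK mulrC -exprS.
have c_neq0 : c != 0 by rewrite invr_eq0 expf_neq0.
have [r r3] := exists_cube_root card_pow3 c.
pose e := r - a / b; exists (- (a / b)), (- (e + e ^+ q) / c).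
rewrite walsh_rescale // sum_Fq_Kq big_mkcondr mulr_sumr; apply: eq_bigr => k Kk.
under eq_bigr => s Fs do rewrite (psi_split _ c_q r3 Fs Kk).
rewrite -mulr_suml sum_psi_Fq Kq_sub_sqr //.
by case: ifP => _; rewrite ?mulNr ?mulr0 ?mul0r.
Qed.

End QuadraticExtension.

Theorem proposition10 (F : finFieldType) (m : nat) (hm : (1 <= m)%N)
    (hF : #|F| = ((3 ^ m) ^ 2)%N) (a b : F) (hb : b != 0) :
  let q : algC := (3 ^ m)%:R in
  let W := walsh m (fun x : F => x ^+ (3 ^ m + 2)) a b in
  W = - q \/ W = 0 \/ W = q \/ W = 2 * q.
Proof.
(* [hm] follows from [hF], as #|F| > 1. *)
move=> q W; have [a' [g W_eq]] := walsh_sum_roots hF a hb.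
rewrite /W W_eq.
have := sum_psi_sqrt (card_pow3 hF) a' g (@KqN _ _ hF).
by case=> [|[|[|]]] ->; rewrite ?mulrN1 ?mulr0 ?mulr1 ?[_ * 2]mulrC; auto.
Qed.
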